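(* Let $\mathscr F$ be a universally separable class of functions $\Omega\to[0,1]$, $\varepsilon>0$ and $d\in\mathbb N$. The following are equivalent: (1) $\mathrm{fat}_\varepsilon(\mathscr F\,\mathrm{mod}\,\omega_1)\le d$; (2) there is a countable set $N\subseteq\Omega$ such that $\mathrm{fat}_\varepsilon(\mathscr F\restriction(\Omega\setminus N))\le d$.
   Context: $\mathscr F$ is universally separable if it has a countable subfamily $\mathscr F'$ such that every $f\in\mathscr F$ is a pointwise limit of a sequence from $\mathscr F'$. A finite $A\subseteq X$ is $\varepsilon$-fat shattered by $\mathscr F$ if there is $h:A\to[0,1]$ such that for every $B\subseteq A$ some $f_B\in\mathscr F$ has $f_B(a)>h(a)+\varepsilon$ for $a\in B$ and $f_B(a)<h(a)-\varepsilon$ for $a\in A\setminus B$; $\mathrm{fat}_\varepsilon(\mathscr F\restriction X)$ is the supremum of sizes of such $A\subseteq X$. $\mathrm{fat}_\varepsilon(\mathscr F\,\mathrm{mod}\,\omega_1)$ is the supremum of $n$ for which there exist uncountable $A_1,\dots,A_n\subseteq\Omega$ and $h:\{1,\dots,n\}\to[0,1]$ such that for every $J\subseteq\{1,\dots,n\}$ there is $f_J\in\mathscr F$ with $f_J(x)>h(i)+\varepsilon$ whenever $i\in J$, $x\in A_i$, and $f_J(x)<h(i)-\varepsilon$ whenever $i\notin J$, $x\in A_i$. *)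

From Stdlib Require Import Reals List.
Open Scope R_scope.

(* A set S ⊆ T (as a predicate) is countable iff some map T -> nat is injective on S
   (this includes finite and empty sets). *)
Definition countable {T : Type} (S : T -> Prop) : Prop :=
  exists g : T -> nat, forall x y, S x -> S y -> g x = g y -> x = y.

Definition universally_separable {Omega : Type} (F : (Omega -> R) -> Prop) : Prop :=
  exists F' : (Omega -> R) -> Prop,
    (forall f, F' f -> F f) /\ countable F' /\
    forall f, F f -> exists u : nat -> (Omega -> R),
      (forall n, F' (u n)) /\ forall x, Un_cv (fun n => u n x) (f x).

Definition fat_shattered {Omega : Type} (eps : R) (F : (Omega -> R) -> Prop)
  (A : list Omega) : Prop :=
  exists h : Omega -> R,
    (forall a, In a A -> 0 <= h a <= 1) /\
    forall B : Omega -> Prop, exists f, F f /\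
      forall a, In a A ->
        (B a -> f a > h a + eps) /\ (~ B a -> f a < h a - eps).

Definition fat_restr_le {Omega : Type} (eps : R) (F : (Omega -> R) -> Prop)
  (X : Omega -> Prop) (d : nat) : Prop :=
  forall A : list Omega, NoDup A -> (forall a, In a A -> X a) ->
    fat_shattered eps F A -> (length A <= d)%nat.

Definition fat_mod_omega1_le {Omega : Type} (eps : R) (F : (Omega -> R) -> Prop)
  (d : nat) : Prop :=
  forall (n : nat) (A : nat -> Omega -> Prop) (h : nat -> R),
    (forall i, (i < n)%nat -> ~ countable (A i)) ->
    (forall i, (i < n)%nat -> 0 <= h i <= 1) ->
    (forall J : nat -> Prop, exists f, F f /\
       forall i, (i < n)%nat -> forall x, A i x ->
         (J i -> f x > h i + eps) /\ (~ J i -> f x < h i - eps)) ->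
    (n <= d)%nat.

From Stdlib Require Import Reals List Lra Lia Classical ClassicalEpsilon ZArith.
From Stdlib Require Cantor.
Open Scope R_scope.

(* (2) => (1): each uncountable A_i meets the complement of the countable set N;
   points picked this way are pairwise distinct and fat-shatter with the
   thresholds h_i, so there are at most d of them.

   (1) => (2): by separability, a fat-shattering of d+1 points is realised,
   with some uniform slack, by finitely many functions of the countable family
   F' and rational thresholds.  Such "witnesses" form a countable set.  For a
   witness w and a coordinate i, the points lying on the side of the i-th
   threshold prescribed by every function of w form a region; the d+1 regions
   of w fat-shatter F mod omega_1, so by (1) one of them is countable.  Let N
   be the union of all countable regions: a shattered set of d+1 points off N
   yields a witness whose countable region contains one of these points. *)

Lemma to_nat_inj (p q : nat * nat) : Cantor.to_nat p = Cantor.to_nat q -> p = q.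
Proof.
  intro E. rewrite <- (Cantor.cancel_of_to p), <- (Cantor.cancel_of_to q), E.
  reflexivity.
Qed.

Lemma countable_sub {T} (P Q : T -> Prop) :
  (forall x, P x -> Q x) -> countable Q -> countable P.
Proof. intros HPQ [g Hg]. exists g. intros x y Hx Hy. apply Hg; auto. Qed.

Lemma countable_nat : countable (fun _ : nat => True).
Proof. exists (fun n => n). auto. Qed.

Lemma countable_bool : countable (fun _ : bool => True).
Proof.
  exists (fun b : bool => if b then 1%nat else 0%nat).
  intros [|] [|] _ _ E; easy.
Qed.

Lemma countable_prod {T U} (P : T -> Prop) (Q : U -> Prop) :
  countable P -> countable Q -> countable (fun p => P (fst p) /\ Q (snd p)).
Proof.
  intros [g Hg] [k Hk]. exists (fun p => Cantor.to_nat (g (fst p), k (snd p))).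
  intros [x1 y1] [x2 y2] [Hx1 Hy1] [Hx2 Hy2] E; cbn [fst snd] in *.
  apply to_nat_inj in E. injection E as Ex Ey. f_equal; auto.
Qed.

Fixpoint list_code {T} (g : T -> nat) (l : list T) : nat :=
  match l with
  | nil => 0%nat
  | x :: l' => S (Cantor.to_nat (g x, list_code g l'))
  end.

Lemma countable_Forall {T} (P : T -> Prop) : countable P -> countable (Forall P).
Proof.
  intros [g Hg]. exists (list_code g). intro l.
  induction l as [|a l IH]; intros [|b l'] Hl Hl' E; cbn [list_code] in E;
    try discriminate; auto.
  apply Nat.succ_inj, to_nat_inj in E. injection E as Eab El.
  inversion_clear Hl. inversion_clear Hl'. f_equal; auto.
Qed.

Lemma countable_bigcup {I T} (Ic : I -> Prop) (P : I -> T -> Prop) :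
  countable Ic -> (forall i, Ic i -> countable (P i)) ->
  countable (fun x => exists i, Ic i /\ P i x).
Proof.
  intros [gI HgI] HP.
  destruct (choice (fun i (g : T -> nat) =>
      Ic i -> forall x y, P i x -> P i y -> g x = g y -> x = y)) as [G HG].
  { intro i. destruct (classic (Ic i)) as [Hi|Hi].
    - destruct (HP i Hi) as [g Hg]. exists g. auto.
    - exists (fun _ => 0%nat). tauto. }
  destruct (classic (inhabited I)) as [[i0]|HI].
  2: { exists (fun _ => 0%nat). intros x y [i _]. exfalso. exact (HI (inhabits i)). }
  destruct (choice (fun x i => (exists j, Ic j /\ P j x) -> Ic i /\ P i x))
    as [idx Hidx].
  { intro x. destruct (classic (exists j, Ic j /\ P j x)) as [[j Hj]|Hx].
    - exists j. auto.
    - exists i0. tauto. }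
  exists (fun x => Cantor.to_nat (gI (idx x), G (idx x) x)).
  intros x y Hx Hy E. apply to_nat_inj in E. injection E as Ei Ex.
  destruct (Hidx x Hx) as [Hix Hpx]. destruct (Hidx y Hy) as [Hiy Hpy].
  assert (Hi : idx x = idx y) by (apply HgI; auto).
  rewrite Hi in Hix, Hpx, Ex. apply (HG (idx y)); auto.
Qed.

Lemma not_countable_diff {T} (A N : T -> Prop) :
  ~ countable A -> countable N -> exists x, A x /\ ~ N x.
Proof.
  intros HA HN. apply NNPP. intro Hno. apply HA, (countable_sub A N); auto.
  intros x Hx. apply NNPP. intro HNx. apply Hno. eauto.
Qed.

Lemma extend_along_inj {T U} (u0 : U) (n : nat) (c : nat -> T) (h : nat -> U) :
  (forall i j, (i < n)%nat -> (j < n)%nat -> c i = c j -> i = j) ->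
  exists h' : T -> U, forall i, (i < n)%nat -> h' (c i) = h i.
Proof.
  intro Hinj.
  destruct (choice (fun x y => forall i, (i < n)%nat -> c i = x -> y = h i))
    as [h' Hh'].
  { intro x. destruct (classic (exists i, (i < n)%nat /\ c i = x)) as [[i [Hi Ei]]|Hx].
    - exists (h i). intros j Hj Ej. f_equal. apply Hinj; auto. congruence.
    - exists u0. intros j Hj Ej. exfalso. eauto. }
  exists h'. intros i Hi. apply Hh'; auto.
Qed.

Section ModShatteringTransversal.
Variables (Omega : Type) (F : (Omega -> R) -> Prop) (eps : R) (n : nat).
Variables (A : nat -> Omega -> Prop) (h : nat -> R) (c : nat -> Omega).
Hypothesis eps_ge0 : 0 <= eps.
Hypothesis h_unit : forall i, (i < n)%nat -> 0 <= h i <= 1.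
Hypothesis A_shattered : forall J : nat -> Prop, exists f, F f /\
  forall i, (i < n)%nat -> forall x, A i x ->
    (J i -> f x > h i + eps) /\ (~ J i -> f x < h i - eps).
Hypothesis c_in_A : forall i, (i < n)%nat -> A i (c i).

Lemma transversal_inj i j : (i < n)%nat -> (j < n)%nat -> c i = c j -> i = j.
Proof.
  intros Hi Hj E. apply NNPP. intro Hij.
  destruct (A_shattered (fun k => k = i)) as [f [_ Hf]].
  destruct (A_shattered (fun k => k = j)) as [g [_ Hg]].
  destruct (Hf i Hi (c i) (c_in_A i Hi)) as [Hfi _].
  destruct (Hf j Hj (c j) (c_in_A j Hj)) as [_ Hfj].
  destruct (Hg j Hj (c j) (c_in_A j Hj)) as [Hgj _].
  destruct (Hg i Hi (c i) (c_in_A i Hi)) as [_ Hgi].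
  specialize (Hfi eq_refl). specialize (Hgj eq_refl).
  specialize (Hfj (fun Eji => Hij (eq_sym Eji))). specialize (Hgi Hij).
  rewrite E in Hfi, Hgi. lra.
Qed.

Lemma transversal_NoDup : NoDup (map c (seq 0 n)).
Proof.
  apply NoDup_map_NoDup_ForallPairs; [|apply seq_NoDup].
  intros i j Hi Hj. apply in_seq in Hi, Hj. apply transversal_inj; lia.
Qed.

Lemma transversal_fat_shattered : fat_shattered eps F (map c (seq 0 n)).
Proof.
  destruct (extend_along_inj 0 n c h transversal_inj) as [h' Hh'].
  exists h'. split.
  - intros a Ha. apply in_map_iff in Ha. destruct Ha as [i [<- Hi]].
    apply in_seq in Hi. rewrite Hh' by lia. apply h_unit. lia.
  - intro B. destruct (A_shattered (fun i => B (c i))) as [f [Hf Hfc]].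
    exists f. split; [exact Hf|].
    intros a Ha. apply in_map_iff in Ha. destruct Ha as [i [<- Hi]].
    apply in_seq in Hi. rewrite Hh' by lia. apply Hfc; [lia|]. apply c_in_A. lia.
Qed.

End ModShatteringTransversal.

Lemma fat_mod_le_of_countable_exception (Omega : Type) (F : (Omega -> R) -> Prop)
  (eps : R) (d : nat) :
  0 <= eps ->
  (exists N : Omega -> Prop, countable N /\ fat_restr_le eps F (fun x => ~ N x) d) ->
  fat_mod_omega1_le eps F d.
Proof.
  intros Heps [N [HN Hfat]] n A h HA Hh Hsh.
  destruct n as [|n']; [lia|].
  assert (Hout : forall i, (i < S n')%nat -> exists x, A i x /\ ~ N x).
  { intros i Hi. apply not_countable_diff; auto. }
  destruct (Hout 0%nat ltac:(lia)) as [x0 _].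
  destruct (choice (fun i x => (i < S n')%nat -> A i x /\ ~ N x)) as [c Hc].
  { intro i. destruct (Nat.lt_ge_cases i (S n')) as [Hi|Hi].
    - destruct (Hout i Hi) as [x Hx]. exists x. auto.
    - exists x0. intro. lia. }
  assert (HcA : forall i, (i < S n')%nat -> A i (c i)) by (intros i Hi; apply Hc, Hi).
  replace (S n') with (length (map c (seq 0 (S n'))))
    by (rewrite length_map, length_seq; reflexivity).
  apply Hfat.
  - eapply transversal_NoDup; eauto.
  - intros a Ha. apply in_map_iff in Ha. destruct Ha as [i [<- Hi]].
    apply in_seq in Hi. apply Hc. lia.
  - eapply transversal_fat_shattered; eauto.
Qed.

Lemma uniform_pos_on_list {T} (L : list T) (P : T -> R -> Prop) :
  (forall t a b, 0 < b <= a -> P t a -> P t b) ->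
  (forall t, In t L -> exists a, 0 < a /\ P t a) ->
  exists a, 0 < a /\ forall t, In t L -> P t a.
Proof.
  intros Hmono. induction L as [|x L IH]; intros HL.
  - exists 1. split; [lra|]. intros t [].
  - destruct IH as [a [Ha Ha']]; [intros t Ht; apply HL; right; exact Ht|].
    destruct (HL x (or_introl eq_refl)) as [b [Hb Hb']].
    assert (Hmin : 0 < Rmin a b) by (apply Rmin_glb_lt; assumption).
    exists (Rmin a b). split; [exact Hmin|].
    intros t [<-|Ht].
    + apply (Hmono x b); [split; [exact Hmin|apply Rmin_r]|exact Hb'].
    + apply (Hmono t a); [split; [exact Hmin|apply Rmin_l]|apply Ha', Ht].
Qed.

Lemma uniform_eventually_on_list {T} (L : list T) (Q : T -> nat -> Prop) :
  (forall t, In t L -> exists N, forall n, (N <= n)%nat -> Q t n) ->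
  exists N, forall t, In t L -> forall n, (N <= n)%nat -> Q t n.
Proof.
  induction L as [|x L IH]; intros HL.
  - exists 0%nat. intros t [].
  - destruct IH as [N1 H1]; [intros t Ht; apply HL; right; exact Ht|].
    destruct (HL x (or_introl eq_refl)) as [N2 H2].
    exists (Nat.max N1 N2). intros t [<-|Ht] n Hn.
    + apply H2. lia.
    + apply H1; [exact Ht|lia].
Qed.

Lemma nth_map_seq {Y} (g : nat -> Y) (m i : nat) (y : Y) :
  (i < m)%nat -> nth i (map g (seq 0 m)) y = g i.
Proof.
  intro Hi. rewrite (nth_indep _ y (g 0%nat)) by (rewrite length_map, length_seq; exact Hi).
  rewrite map_nth, seq_nth by exact Hi. reflexivity.
Qed.

Definition bit (bl : list bool) (i : nat) : bool := nth i bl false.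

Fixpoint all_bits (m : nat) : list (list bool) :=
  match m with
  | O => nil :: nil
  | S k => map (cons true) (all_bits k) ++ map (cons false) (all_bits k)
  end.

Lemma in_all_bits (bl : list bool) : In bl (all_bits (length bl)).
Proof.
  induction bl as [|b bl IH]; cbn; [auto|].
  apply in_or_app. destruct b; [left|right]; apply in_map, IH.
Qed.

Lemma all_bits_complete (m : nat) (J : nat -> Prop) :
  exists bl, In bl (all_bits m) /\ forall i, (i < m)%nat -> (bit bl i = true <-> J i).
Proof.
  set (bl := map (fun i => if excluded_middle_informative (J i) then true else false)
                 (seq 0 m)).
  exists bl. split.
  - assert (Hlen : length bl = m) by (unfold bl; rewrite length_map, length_seq; reflexivity).
    rewrite <- Hlen. apply in_all_bits.
  - intros i Hi. unfold bit, bl. rewrite nth_map_seq by exact Hi.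
    destruct (excluded_middle_informative (J i)); split; intro; easy.
Qed.

Definition rat_of (p : nat * nat) : R := INR (fst p) / INR (S (snd p)).

Lemma rat_of_dense (r del : R) : 0 <= r <= 1 -> 0 < del ->
  exists p, 0 <= rat_of p <= 1 /\ Rabs (rat_of p - r) < del.
Proof.
  intros Hr Hdel.
  destruct (archimed (/ del)) as [Hup _].
  assert (Hinv : 0 < / del) by (apply Rinv_0_lt_compat; exact Hdel).
  set (b := Z.to_nat (up (/ del))).
  assert (HK : / del < INR (S b)).
  { rewrite S_INR. unfold b. rewrite INR_IZR_INZ, Z2Nat.id; [lra|]. apply le_IZR. lra. }
  set (K := INR (S b)) in *.
  assert (HKdel : 1 < K * del).
  { replace 1 with (/ del * del) by (field; lra). apply Rmult_lt_compat_r; assumption. }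
  destruct (archimed (r * K)) as [Hz1 Hz2].
  set (z := (up (r * K) - 1)%Z).
  assert (Hz : IZR z <= r * K < IZR z + 1) by (unfold z; rewrite minus_IZR; lra).
  assert (Hz0 : (0 <= z)%Z).
  { assert (-1 < z)%Z; [|lia]. apply lt_IZR. nra. }
  exists (Z.to_nat z, b). unfold rat_of. cbn [fst snd]. fold K.
  rewrite INR_IZR_INZ, Z2Nat.id by exact Hz0.
  set (q := IZR z / K).
  assert (Hq : q * K = IZR z) by (unfold q; field; lra).
  assert (0 <= IZR z) by (apply IZR_le; exact Hz0).
  assert (0 <= q <= r /\ r - q < del) by nra.
  split; [lra|]. rewrite Rabs_left1; lra.
Qed.

Lemma rat_thresholds (m : nat) (t : nat -> R) (del : R) :
  (forall i, (i < m)%nat -> 0 <= t i <= 1) -> 0 < del ->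
  exists qs, forall i, (i < m)%nat ->
    0 <= rat_of (nth i qs (0%nat, 0%nat)) <= 1 /\
    Rabs (rat_of (nth i qs (0%nat, 0%nat)) - t i) < del.
Proof.
  intros Ht Hdel.
  destruct (choice (fun i p =>
      (i < m)%nat -> 0 <= rat_of p <= 1 /\ Rabs (rat_of p - t i) < del)) as [q Hq].
  { intro i. destruct (Nat.lt_ge_cases i m) as [Hi|Hi].
    - destruct (rat_of_dense (t i) del) as [p Hp]; auto. exists p. auto.
    - exists (0%nat, 0%nat). intro. lia. }
  exists (map q (seq 0 m)). intros i Hi.
  rewrite nth_map_seq by exact Hi. apply Hq, Hi.
Qed.

Section Separation.
Context {Omega : Type}.
Variables (pts : nat -> Omega) (m : nat).

Definition separates (f : Omega -> R) (t : nat -> R) (e : R) (bl : list bool) : Prop :=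
  forall i, (i < m)%nat ->
    (bit bl i = true -> f (pts i) > t i + e) /\ (bit bl i = false -> f (pts i) < t i - e).

Lemma separates_le f t e e' bl : e' <= e -> separates f t e bl -> separates f t e' bl.
Proof.
  intros He Hf i Hi. destruct (Hf i Hi) as [Hup Hdn].
  split; intro Hb; [specialize (Hup Hb)|specialize (Hdn Hb)]; lra.
Qed.

Lemma separates_shift f t t' e del bl :
  (forall i, (i < m)%nat -> Rabs (t' i - t i) < del) ->
  separates f t (e + del) bl -> separates f t' e bl.
Proof.
  intros Ht Hf i Hi. destruct (Hf i Hi) as [Hup Hdn].
  destruct (Rabs_def2 _ _ (Ht i Hi)) as [Hlo Hhi].
  split; intro Hb; [specialize (Hup Hb)|specialize (Hdn Hb)]; lra.
Qed.

Lemma separates_open f t e bl :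
  separates f t e bl -> exists del, 0 < del /\ separates f t (e + del) bl.
Proof.
  intro Hf.
  destruct (uniform_pos_on_list (seq 0 m) (fun i del =>
      (bit bl i = true -> f (pts i) > t i + (e + del)) /\
      (bit bl i = false -> f (pts i) < t i - (e + del)))) as [del [Hdel Hall]].
  - intros i a b Hab [Hup Hdn].
    split; intro Hb; [specialize (Hup Hb)|specialize (Hdn Hb)]; lra.
  - intros i Hi. apply in_seq in Hi. destruct (Hf i ltac:(lia)) as [Hup Hdn].
    destruct (bit bl i) eqn:Eb.
    + specialize (Hup eq_refl). exists ((f (pts i) - t i - e) / 2).
      split; [lra|]. split; intro Hb; [lra|discriminate].
    + specialize (Hdn eq_refl). exists ((t i - e - f (pts i)) / 2).
      split; [lra|]. split; intro Hb; [discriminate|lra].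
  - exists del. split; [exact Hdel|]. intros i Hi. apply Hall, in_seq. lia.
Qed.

Lemma separates_limit (u : nat -> Omega -> R) f t e bl :
  (forall x, Un_cv (fun k => u k x) (f x)) -> separates f t e bl ->
  exists del k, 0 < del /\ separates (u k) t (e + del) bl.
Proof.
  intros Hu Hf. destruct (separates_open f t e bl Hf) as [del [Hdel Hfd]].
  destruct (uniform_eventually_on_list (seq 0 m)
      (fun i k => Rabs (u k (pts i) - f (pts i)) < del / 2)) as [K HK].
  { intros i _. destruct (Hu (pts i) (del / 2)) as [K HK]; [lra|].
    exists K. intros k Hk. apply HK. lia. }
  exists (del / 2), K. split; [lra|].
  intros i Hi. destruct (Hfd i Hi) as [Hup Hdn].
  assert (Hsi : In i (seq 0 m)) by (apply in_seq; lia).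
  destruct (Rabs_def2 _ _ (HK i Hsi K (le_n K))) as [Hlo Hhi].
  split; intro Hb; [specialize (Hup Hb)|specialize (Hdn Hb)]; lra.
Qed.

End Separation.

Lemma fat_shattered_separates {Omega} (F : (Omega -> R) -> Prop) (eps : R)
  (A : list Omega) (a0 : Omega) (m : nat) :
  NoDup A -> (m <= length A)%nat -> fat_shattered eps F A ->
  exists t : nat -> R, (forall i, (i < m)%nat -> 0 <= t i <= 1) /\
    forall bl, exists f, F f /\ separates (fun i => nth i A a0) m f t eps bl.
Proof.
  intros Hnd Hm [h [Hh Hsh]].
  set (pts := fun i => nth i A a0).
  assert (Hin : forall i, (i < m)%nat -> In (pts i) A) by (intros i Hi; apply nth_In; lia).
  exists (fun i => h (pts i)). split; [intros i Hi; apply Hh, Hin, Hi|].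
  intro bl.
  destruct (Hsh (fun a => exists i, (i < m)%nat /\ pts i = a /\ bit bl i = true))
    as [f [Hf Hfs]].
  exists f. split; [exact Hf|].
  intros i Hi. destruct (Hfs (pts i) (Hin i Hi)) as [Hup Hdn]. split; intro Hb.
  - apply Hup. eauto.
  - apply Hdn. intros [j [Hj [Eji Hbj]]].
    assert (j = i) as -> by (apply (proj1 (NoDup_nth A a0) Hnd); [lia|lia|exact Eji]).
    congruence.
Qed.

Section Witness.
Context {Omega : Type}.
Variable eps : R.

Definition witness : Type := (list (nat * nat) * list (list bool * (Omega -> R)))%type.

Definition threshold (w : witness) (i : nat) : R := rat_of (nth i (fst w) (0%nat, 0%nat)).

Definition region (w : witness) (i : nat) (x : Omega) : Prop :=
  forall bl f, In (bl, f) (snd w) ->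
    (bit bl i = true -> f x > threshold w i + eps) /\
    (bit bl i = false -> f x < threshold w i - eps).

Definition witness_over (F' : (Omega -> R) -> Prop) (w : witness) : Prop :=
  forall bl f, In (bl, f) (snd w) -> F' f.

Definition shattering_witness (F' : (Omega -> R) -> Prop) (m : nat) (w : witness) : Prop :=
  witness_over F' w /\
  (forall i, (i < m)%nat -> 0 <= threshold w i <= 1) /\
  forall J : nat -> Prop, exists bl f, In (bl, f) (snd w) /\
    forall i, (i < m)%nat -> (bit bl i = true <-> J i).

Lemma countable_witness_over (F' : (Omega -> R) -> Prop) :
  countable F' -> countable (witness_over F').
Proof.
  intro HF'.
  apply (countable_sub _ (fun w : witness =>
    Forall (fun _ => True) (fst w) /\ Forall (fun p => True /\ F' (snd p)) (snd w))).
  - intros [qs fs] Hw. split; apply Forall_forall; [auto|].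
    intros [bl f] Hin. exact (conj I (Hw bl f Hin)).
  - apply (countable_prod (Forall (fun _ : nat * nat => True))
             (Forall (fun p : list bool * (Omega -> R) => True /\ F' (snd p))));
      apply countable_Forall.
    + apply (countable_sub _ (fun p : nat * nat => True /\ True)); [auto|].
      apply (countable_prod (fun _ : nat => True) (fun _ : nat => True));
        apply countable_nat.
    + apply (countable_prod (fun _ : list bool => True) F'); [|exact HF'].
      apply (countable_sub _ (Forall (fun _ : bool => True))).
      * intros l _. apply Forall_forall. auto.
      * apply countable_Forall, countable_bool.
Qed.

Lemma fat_mod_le_countable_region (F F' : (Omega -> R) -> Prop) (d : nat) (w : witness) :
  fat_mod_omega1_le eps F d -> (forall f, F' f -> F f) ->
  shattering_witness F' (S d) w -> exists i, (i < S d)%nat /\ countable (region w i).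
Proof.
  intros Hmod HF'F [HwF' [Hthr HwJ]]. apply NNPP. intro Hno.
  enough (S d <= d)%nat by lia.
  apply (Hmod (S d) (region w) (threshold w)).
  - intros i Hi Hc. apply Hno. eauto.
  - exact Hthr.
  - intro J. destruct (HwJ J) as [bl [f [Hin Hbl]]].
    exists f. split; [exact (HF'F f (HwF' bl f Hin))|].
    intros i Hi x Hx. destruct (Hx bl f Hin) as [Hup Hdn]. split; intro HJ.
    + apply Hup, (Hbl i Hi), HJ.
    + apply Hdn. destruct (bit bl i) eqn:Eb; [|reflexivity].
      exfalso. apply HJ, (Hbl i Hi), Eb.
Qed.

Lemma exists_shattering_witness (F F' : (Omega -> R) -> Prop) (pts : nat -> Omega)
  (m : nat) (t : nat -> R) :
  (forall f, F f -> exists u : nat -> Omega -> R,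
     (forall k, F' (u k)) /\ forall x, Un_cv (fun k => u k x) (f x)) ->
  (forall i, (i < m)%nat -> 0 <= t i <= 1) ->
  (forall bl, exists f, F f /\ separates pts m f t eps bl) ->
  exists w, shattering_witness F' m w /\ forall i, (i < m)%nat -> region w i (pts i).
Proof.
  intros Happ Ht Hsep.
  destruct (uniform_pos_on_list (all_bits m)
      (fun bl del => exists f, F' f /\ separates pts m f t (eps + del) bl))
    as [del [Hdel Hbits]].
  { intros bl a b Hab [f [Hf Hfa]]. exists f. split; [exact Hf|].
    apply (separates_le pts m f t (eps + a)); [lra|exact Hfa]. }
  { intros bl _. destruct (Hsep bl) as [f [Hf Hfs]].
    destruct (Happ f Hf) as [u [Hu Hcv]].
    destruct (separates_limit pts m u f t eps bl Hcv Hfs) as [del [k [Hdel Hk]]].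
    exists del. split; [exact Hdel|]. exists (u k). auto. }
  destruct (choice (fun bl f =>
      In bl (all_bits m) -> F' f /\ separates pts m f t (eps + del) bl)) as [g Hg].
  { intro bl. destruct (classic (In bl (all_bits m))) as [Hbl|Hbl].
    - destruct (Hbits bl Hbl) as [f Hf]. exists f. auto.
    - exists (fun _ => 0). tauto. }
  destruct (rat_thresholds m t del Ht Hdel) as [qs Hq].
  set (w := (qs, map (fun bl => (bl, g bl)) (all_bits m)) : witness).
  assert (Hw : forall bl f, In (bl, f) (snd w) -> In bl (all_bits m) /\ f = g bl).
  { intros bl f Hin. apply in_map_iff in Hin. destruct Hin as [bl' [E Hbl']].
    injection E as <- <-. auto. }
  exists w. split; [split; [|split]|].
  - intros bl f Hin. destruct (Hw bl f Hin) as [Hbl ->]. apply Hg, Hbl.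
  - intros i Hi. apply Hq, Hi.
  - intro J. destruct (all_bits_complete m J) as [bl [Hbl HJ]].
    exists bl, (g bl). split; [|exact HJ]. apply in_map_iff. exists bl. auto.
  - intros i Hi bl f Hin. destruct (Hw bl f Hin) as [Hbl ->].
    destruct (Hg bl Hbl) as [_ Hgbl].
    apply (separates_shift pts m (g bl) t (threshold w) eps del bl); [|exact Hgbl|exact Hi].
    intros j Hj. apply Hq, Hj.
Qed.

End Witness.

Lemma countable_exception_of_fat_mod_le (Omega : Type) (F : (Omega -> R) -> Prop)
  (eps : R) (d : nat) :
  universally_separable F -> fat_mod_omega1_le eps F d ->
  exists N : Omega -> Prop, countable N /\ fat_restr_le eps F (fun x => ~ N x) d.
Proof.
  intros [F' [HF'F [HF'c Happ]]] Hmod.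
  set (Ic := fun wi : witness * nat =>
    shattering_witness F' (S d) (fst wi) /\ countable (region eps (fst wi) (snd wi))).
  exists (fun x => exists wi, Ic wi /\ region eps (fst wi) (snd wi) x). split.
  - apply countable_bigcup; [|intros wi [_ Hc]; exact Hc].
    apply (countable_sub _ (fun wi : witness * nat => witness_over F' (fst wi) /\ True)).
    + intros wi [[Hw _] _]. auto.
    + apply (countable_prod (witness_over F') (fun _ : nat => True));
        [apply countable_witness_over, HF'c|apply countable_nat].
  - intros A Hnd Hout Hsh.
    destruct (Nat.le_gt_cases (length A) d) as [Hle|Hgt]; [exact Hle|exfalso].
    destruct A as [|a0 A']; [cbn in Hgt; lia|].
    destruct (fat_shattered_separates F eps (a0 :: A') a0 (S d) Hnd ltac:(lia) Hsh)
      as [t [Ht Hbl]].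
    destruct (exists_shattering_witness eps F F' _ (S d) t Happ Ht Hbl) as [w [Hw Hreg]].
    destruct (fat_mod_le_countable_region eps F F' d w Hmod HF'F Hw) as [i [Hi Hci]].
    apply (Hout (nth i (a0 :: A') a0)); [apply nth_In; lia|].
    exists (w, i). split; [split; assumption|]. apply Hreg, Hi.
Qed.

Theorem mainTheorem14 (Omega : Type) (F : (Omega -> R) -> Prop) (eps : R) (d : nat)
  (HF : forall f, F f -> forall x, 0 <= f x <= 1)
  (Hsep : universally_separable F)
  (Heps : eps > 0) :
  fat_mod_omega1_le eps F d <->
  exists N : Omega -> Prop, countable N /\ fat_restr_le eps F (fun x => ~ N x) d.
Proof.
  split.
  - apply countable_exception_of_fat_mod_le, Hsep.
  - apply fat_mod_le_of_countable_exception. lra.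
Qed.
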